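(* Assume the standing setting and assumptions (A4)–(A8) described in the context. Let $k\in\mathbb{N}$, $k\ge 1$, let $U(T)=U_k(T)$ for all $T\in\mathcal{T}_H$, and let $u_H^{\mathrm{G\text{-}LOD}}\in V^{\mathrm{ms}}$ be the solution of $$a_h(u_H^{\mathrm{G\text{-}LOD}},\Phi^{\mathrm{ms}})=(f,\Phi^{\mathrm{ms}})\quad\text{for all }\Phi^{\mathrm{ms}}\in V^{\mathrm{ms}}.$$ Let $u_h\in V_h$ be the fine scale reference solution. Then $$\big\|u_h-\big((I_H|_{V_H})^{-1}\circ I_H\big)(u_H^{\mathrm{G\text{-}LOD}})\big\|_{L^2(\Omega)}+|||u_h-u_H^{\mathrm{G\text{-}LOD}}|||_h\lesssim\big(H+(1/H)^p k^{d/2}\theta^k\big)\|f\|_{L^2(\Omega)},$$ where $\theta\in(0,1)$ and $p\in\{0,1\}$ are the constants from (A8).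
   Context: Standing setting. $\Omega\subset\mathbb{R}^d$, $d\in\{1,2,3\}$, is a bounded Lipschitz domain with piecewise polygonal boundary; $f\in L^2(\Omega)$; $A\in L^\infty(\Omega,\mathbb{R}^{d\times d}_{sym})$ with spectrum $\sigma(A(x))\subset[\alpha_0,\beta_0]$, $0<\alpha_0\le\beta_0$, for a.e. $x\in\Omega$. $(\cdot,\cdot)$ denotes the $L^2(\Omega)$ inner product. $\mathcal{T}_H$ (coarse) and $\mathcal{T}_h$ (fine) are shape-regular conforming partitions of $\Omega$ with maximal element diameters $H$ and $h<H/2$; $\mathcal{T}_h$ is a refinement of $\mathcal{T}_H$ in which each coarse element is at least twice uniformly refined. (A4)/(A6): $V_h$ is a finite-dimensional space of functions on $\Omega$ (not necessarily a subspace of $H^1_0(\Omega)$), $V_H\subset V_h$ is a subspace associated with $\mathcal{T}_H$, $a_h(\cdot,\cdot)$ is a scalar product on $V_h$ and $a_H(\cdot,\cdot)$ a scalar product on $V_H$. (A5): $|||\cdot|||_h$ is a norm on $V_h$ and there are constants $0<\alpha\le\beta$ with $\alpha|||v|||_h^2\le a_h(v,v)$ and $a_h(v,w)\le\beta|||v|||_h|||w|||_h$ for all $v,w\in V_h$; $|||\cdot|||_H$ is a norm on $V_H$ (also evaluated on elements of $V_h$), and $C_{H,h}$ is a constant with $|||v|||_H\le C_{H,h}|||v|||_h$ for all $v\in V_h$. (A7): $I_H:V_h\to V_H$ is linear and there is a constant $C_{I_H}$ (depending only on shape regularity) such that for all $v_h\in V_h$, $v_H\in V_H$: $\|v_h-I_H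 v_h\|_{L^2(\Omega)}\le C_{I_H}H|||v_h|||_h$, $|||I_Hv_h|||_H\le C_{I_H}|||v_h|||_h$, $\|v_H-I_Hv_H\|_{L^2(\Omega)}\le C_{I_H}H|||v_H|||_H$, $\|I_Hv_H\|_{L^2(\Omega)}\le C_{I_H}|||v_H|||_H$; moreover $I_H|_{V_H}:V_H\to V_H$ is an isomorphism and $|||(I_H|_{V_H})^{-1}v_H|||_H\le C_{I_H^{-1}}|||v_H|||_H$ for all $v_H\in V_H$. Definitions. $W_h:=\{v\in V_h: I_Hv=0\}$, so $V_h=V_H\oplus W_h$. $P_h:V_h\to W_h$ is the $a_h$-orthogonal projection ($a_h(P_hv,w)=a_h(v,w)$ for all $w\in W_h$) and $V^{\mathrm{ms}}_\Omega:=(1-P_h)(V_H)$. Coarse patches: $U_0(T):=T$, $U_k(T):=\bigcup\{T'\in\mathcal{T}_H: T'\cap U_{k-1}(T)\ne\emptyset\}$. For an open set $U$ that is a union of fine elements, $\mathring W_h(U):=\{v\in W_h: v=0 \text{ in }\Omega\setminus U\}$. Bilinear forms $a_h^T$, $T\in\mathcal{T}_H$, are given with $a_h(v,w)=\sum_{T\in\mathcal{T}_H}a_h^T(v,w)$ for all $v,w\in V_h$ ($a_h^T$ acting only on $T$ or a small neighbourhood of $T$). Given patches $U(T)\supset T$, for $\phi\in V_h$ the local corrector $Q_h^T(\phi)\in\mathring W_h(U(T))$ solves $a_h(Q_h^T(\phi),w)=-a_h^T(\phi,w)$ for all $w\in\mathring W_h(U(T))$; $Q_h(\phi):=\sum_{T}Q_h^T(\phi)$,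 and $V^{\mathrm{ms}}:=\{\Phi_H+Q_h(\Phi_H):\Phi_H\in V_H\}$. $Q_h^{\Omega,T}$ and $Q_h^\Omega:=\sum_TQ_h^{\Omega,T}$ denote the correctors obtained with $U(T)=\Omega$ for all $T$. (A8): There are $p\in\{0,1\}$ and $\theta\in(0,1)$ (possibly depending on the contrast $\beta_0/\alpha_0$ but not on $H,h$ or the oscillations of $A$) such that for every $k\ge1$, with $U(T)=U_k(T)$ for all $T$, and all $\Phi_H\in V_H$: $|||(Q_h-Q_h^\Omega)(\Phi_H)|||_h^2\lesssim k^d\theta^{2k}(1/H)^{2p}|||\Phi_H+Q_h^\Omega(\Phi_H)|||_h^2$. Fine scale reference solution: $u_h\in V_h$ with $a_h(u_h,v)=(f,v)$ for all $v\in V_h$. Notation: $a\lesssim b$ means $a\le Cb$ with $C$ independent of $H$, $h$, $k$ and the oscillations of $A$ (it may depend on $\alpha,\beta,C_{I_H},C_{I_H^{-1}}$, shape regularity and the contrast). *)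

From HB Require Import structures.
From mathcomp Require Import all_boot all_order all_algebra.
Set Implicit Arguments. Unset Strict Implicit. Unset Printing Implicit Defensive.
Import Order.TTheory GRing.Theory Num.Theory.
Local Open Scope ring_scope.

Section Defs.
Variable R : rcfType.

Definition is_scalar_product_on (V : vectType R) (U : {vspace V})
  (a : V -> V -> R) : Prop :=
  [/\ forall (c : R) (u v w : V), u \in U -> v \in U -> w \in U ->
        a (c *: u + v) w = c * a u w + a v w,
      forall u v : V, u \in U -> v \in U -> a u v = a v u
    & forall v : V, v \in U -> v != 0 -> 0 < a v v].

Definition is_inner_product (L : lmodType R) (ip : L -> L -> R) : Prop :=
  [/\ forall (c : R) (u v w : L), ip (c *: u + v) w = c * ip u w + ip v w,
      forall u v : L, ip u v = ip v u
    & forall v : L, v != 0 -> 0 < ip v v].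

Definition l2norm (L : lmodType R) (ip : L -> L -> R) (v : L) : R :=
  Num.sqrt (ip v v).

Definition is_bilinear (V : lmodType R) (a : V -> V -> R) : Prop :=
  forall (c : R) (u v w : V),
    a (c *: u + v) w = c * a u w + a v w /\ a w (c *: u + v) = c * a w u + a w v.

Definition is_norm_on (V : vectType R) (U : {vspace V}) (n : V -> R) : Prop :=
  [/\ forall v, v \in U -> 0 <= n v,
      forall v, v \in U -> n v = 0 -> v = 0,
      forall (c : R) v, v \in U -> n (c *: v) = `|c| * n v
    & forall v w, v \in U -> w \in U -> n (v + w) <= n v + n w].

Definition is_corrector (V : vectType R) (inS : pred V)
  (a aT : V -> V -> R) (phi q : V) : Prop :=
  inS q /\ forall w, inS w -> a q w = - aT phi w.
End Defs.

(* Coarse patches: U_0(T) = T, U_k(T) = union of coarse T' touching U_{k-1}(T).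
   touch T' T'' means that the closed elements T' and T'' intersect. *)
Fixpoint patch (TH : finType) (touch : rel TH) (k : nat) (T : TH) : {set TH} :=
  match k with
  | 0 => [set T]
  | k'.+1 => [set T' | [exists T'', (T'' \in patch touch k' T) && touch T' T'']]
  end.

(* membership in  W_h(U_k(T)) (ring zero-of-W_h and vanishing outside the patch):
   I_H w = 0 and w vanishes on every fine element whose coarse parent is not
   in the patch U_k(T). vanish t is the subspace of functions vanishing on t. *)
Definition inWloc (R : rcfType) (Vh : vectType R) (IH : Vh -> Vh)
  (TH Th : finType) (touch : rel TH) (parent : Th -> TH)
  (vanish : Th -> {vspace Vh}) (k : nat) (T : TH) : pred Vh :=
  fun w => (IH w == 0) &&
    [forall t : Th, (parent t \notin patch touch k T) ==> (w \in vanish t)].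

(* Let Phi := JH (IH uh), so that IH Phi = IH uh. The ideally corrected function
   Phi + QO Phi is a_h-orthogonal to W_h = ker IH, while uh - (Phi + QO Phi) lies in W_h;
   testing the equation of uh with it and using that IH approximates in L^2 to order H on
   W_h gives an energy error O(H). Replacing the global correctors by the localized ones
   costs the factor H^-p k^(d/2) theta^k of (A8), and Cea's lemma transfers both bounds to
   the G-LOD solution. The L^2 error of JH (IH uLOD) splits into the interpolation error of
   uh, which is O(H), plus JH IH applied to uh - uLOD, which the energy error controls. *)

From HB Require Import structures.
From mathcomp Require Import all_boot all_order all_algebra.
From mathcomp Require Import ring lra.
Import Order.TTheory GRing.Theory Num.Theory.
Set Implicit Arguments. Unset Strict Implicit.
Local Open Scope ring_scope.

Section InnerProduct.
Variables (R : rcfType) (L : lmodType R) (ip : L -> L -> R).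
Hypothesis ipP : is_inner_product ip.

Lemma ipC u v : ip u v = ip v u.
Proof. by case: ipP. Qed.

Lemma ipDl u v w : ip (u + v) w = ip u w + ip v w.
Proof. by case: ipP => lin _ _; have := lin 1 u v w; rewrite scale1r mul1r. Qed.

Lemma ip0l w : ip 0 w = 0.
Proof. by apply: (addrI (ip 0 w)); rewrite -ipDl !addr0. Qed.

Lemma ipNl u w : ip (- u) w = - ip u w.
Proof. by apply/eqP; rewrite -subr_eq0 opprK -ipDl addNr ip0l. Qed.

Lemma ipBl u v w : ip (u - v) w = ip u w - ip v w.
Proof. by rewrite ipDl ipNl. Qed.

Lemma ipZl c u w : ip (c *: u) w = c * ip u w.
Proof. by case: ipP => lin _ _; rewrite -[c *: u]addr0 lin ip0l addr0. Qed.

Lemma ip_suml (I : Type) (r : seq I) (P : pred I) (F : I -> L) w :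
  ip (\sum_(i <- r | P i) F i) w = \sum_(i <- r | P i) ip (F i) w.
Proof. exact: (big_morph (ip^~ w) (fun x y => ipDl x y w) (ip0l w)). Qed.

Lemma ipDr u v w : ip w (u + v) = ip w u + ip w v.
Proof. by rewrite ipC ipDl !(ipC w). Qed.

Lemma ipBr u v w : ip w (u - v) = ip w u - ip w v.
Proof. by rewrite ipC ipBl !(ipC w). Qed.

Lemma ipZr c u w : ip w (c *: u) = c * ip w u.
Proof. by rewrite ipC ipZl ipC. Qed.

Lemma ip_ge0 v : 0 <= ip v v.
Proof. by case: (eqVneq v 0) => [->|]; [rewrite ip0l | case: ipP => _ _ pos /pos/ltW]. Qed.

Lemma ip_sqr_le u v : ip u v ^+ 2 <= ip u u * ip v v.
Proof.
have [->|v_neq0] := eqVneq v 0; first by rewrite ip0l ipC ip0l expr0n mulr0.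
have vv_gt0 : 0 < ip v v by case: ipP => _ _; apply.
(* minimise  ip (u - t v) (u - t v) >= 0  at  t = ip u v / ip v v *)
have := ip_ge0 (u - (ip u v / ip v v) *: v).
rewrite !(ipBl, ipBr, ipZl, ipZr) (ipC v u).
set t := ip u v / ip v v; have tv : t * ip v v = ip u v by rewrite mulfVK ?gt_eqF.
by clearbody t; nra.
Qed.

Lemma ip_CauchySchwarz u v : ip u v <= l2norm ip u * l2norm ip v.
Proof.
apply: le_trans (ler_norm _) _; rewrite -sqrtr_sqr -sqrtrM ?ip_ge0 //.
by rewrite ler_sqrt ?mulr_ge0 ?ip_ge0 // ip_sqr_le.
Qed.

Lemma l2normD u v : l2norm ip (u + v) <= l2norm ip u + l2norm ip v.
Proof.
rewrite -ler_sqr ?nnegrE ?addr_ge0 ?sqrtr_ge0 //.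
rewrite sqrrD /l2norm !sqr_sqrtr ?ip_ge0 // ipDl !ipDr (ipC v u).
by have := ip_CauchySchwarz u v; rewrite /l2norm; lra.
Qed.

Lemma l2normB u v : l2norm ip (u - v) <= l2norm ip u + l2norm ip v.
Proof.
have -> : l2norm ip v = l2norm ip (- v) by rewrite /l2norm ipNl ipC ipNl opprK.
exact: l2normD.
Qed.

End InnerProduct.

Lemma inner_product_fullv (R : rcfType) (V : vectType R) (a : V -> V -> R) :
  is_scalar_product_on fullv a -> is_inner_product a.
Proof.
by case=> lin sym pos; split=> *; [apply: lin | apply: sym | apply: pos]; rewrite ?memvf.
Qed.

Section NormOnFullv.
Variables (R : rcfType) (V : vectType R) (n : V -> R).
Hypothesis nP : is_norm_on fullv n.

Lemma norm_fullv_ge0 v : 0 <= n v.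
Proof. by case: nP => ge0 _ _ _; rewrite ge0 ?memvf. Qed.

Lemma norm_fullvD v w : n (v + w) <= n v + n w.
Proof. by case: nP => _ _ _ tri; rewrite tri ?memvf. Qed.

Lemma norm_fullvB v w : n (v - w) <= n v + n w.
Proof.
have -> : n w = n (- w).
  by case: nP => _ _ hom _; rewrite -scaleN1r hom ?memvf // normrN normr1 mul1r.
exact: norm_fullvD.
Qed.

End NormOnFullv.

Lemma ler_normlM (R : realDomainType) (x y : R) : 0 <= y -> x * y <= `|x| * y.
Proof. by move=> y_ge0; rewrite ler_wpM2r ?ler_norm. Qed.

Lemma le_div_of_coercive (R : realFieldType) (alpha K x : R) :
  0 < alpha -> 0 <= K -> 0 <= x -> alpha * x ^+ 2 <= K * x -> x <= K / alpha.
Proof.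
move=> alpha_gt0 K_ge0 x_ge0 coer; rewrite ler_pdivlMr //.
have [->|x_neq0] := eqVneq x 0; first by rewrite mul0r.
have x_gt0 : 0 < x by rewrite lt_def x_neq0.
nra.
Qed.

Lemma le_sqrt_normM (R : rcfType) (C x y : R) :
  0 <= x -> 0 <= y -> x ^+ 2 <= C * y ^+ 2 -> x <= Num.sqrt `|C| * y.
Proof.
move=> x_ge0 y_ge0 le_sqr; rewrite -ler_sqr ?nnegrE ?mulr_ge0 ?sqrtr_ge0 //.
by rewrite exprMn sqr_sqrtr // (le_trans le_sqr) // ler_wpM2r ?sqr_ge0 ?ler_norm.
Qed.

Lemma localization_rate_sqr (R : rcfType) (H theta : R) (d p k : nat) :
  (H ^- p * Num.sqrt (k%:R ^+ d) * theta ^+ k) ^+ 2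
  = k%:R ^+ d * theta ^+ (2 * k) * H ^- (2 * p).
Proof.
rewrite !exprMn sqr_sqrtr ?exprn_ge0 ?ler0n // exprVn -!exprM (mulnC k) (mulnC p).
by ring.
Qed.

Definition friedrichs_constant (R : rcfType) (CI Cinv Hmax : R) : R :=
  `|CI| * (`|Hmax| + `|CI| * `|Cinv|).

Definition energy_error_constant (R : rcfType) (alpha beta CI Cinv C8 Hmax : R) :
    R :=
  beta / alpha ^+ 2 *
    (`|CI| + Num.sqrt `|C8| * (friedrichs_constant CI Cinv Hmax + `|CI| * `|Hmax|)).

Definition glod_constant (R : rcfType) (alpha beta CI Cinv C8 Hmax : R) : R :=
  `|CI| * (1 + `|Cinv| * `|CI|) * friedrichs_constant CI Cinv Hmax / alpha
  + (1 + `|CI| * (`|Hmax| + 1) * `|Cinv| * `|CI|)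
    * energy_error_constant alpha beta CI Cinv C8 Hmax.

Section GLODErrorEstimate.
Variables (R : rcfType) (alpha beta CI Cinv C8 Hmax : R).
Variables (Vh : vectType R) (L : lmodType R) (ip : L -> L -> R) (emb : {linear Vh -> L}).
Variables (VH : {vspace Vh}) (normh normH : Vh -> R) (H : R).
Variables (IH : {linear Vh -> Vh}) (JH : Vh -> Vh).

Local Notation c := `|CI|.
Local Notation ci := `|Cinv|.
Local Notation hm := `|Hmax|.
Local Notation P := (friedrichs_constant CI Cinv Hmax).
Local Notation l2 v := (l2norm ip (emb v)).

Hypotheses (ipP : is_inner_product ip) (H_gt0 : 0 < H) (H_le_Hmax : H <= Hmax).
Hypotheses (normhP : is_norm_on fullv normh) (normHP : is_norm_on VH normH).
Hypothesis A7_IH_VH : forall v, IH v \in VH.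
Hypothesis A7_l2_error : forall v, l2 (v - IH v) <= CI * H * normh v.
Hypothesis A7_stable : forall v, normH (IH v) <= CI * normh v.
Hypothesis A7_l2_error_VH : forall v, v \in VH -> l2 (v - IH v) <= CI * H * normH v.
Hypothesis A7_l2_stable_VH : forall v, v \in VH -> l2 (IH v) <= CI * normH v.
Hypothesis A7_inverse :
  forall v, v \in VH -> [/\ JH v \in VH, IH (JH v) = v & JH (IH v) = v].
Hypothesis A7_inverse_stable : forall v, v \in VH -> normH (JH v) <= Cinv * normH v.

Let normh_ge0 := norm_fullv_ge0 normhP.
Let normH_ge0 v : v \in VH -> 0 <= normH v.
Proof. by case: normHP => ge0 _ _ _; apply: ge0. Qed.
Let H_ge0 : 0 <= H. Proof. exact: ltW. Qed.
Let H_le_hm : H <= hm. Proof. exact: le_trans H_le_Hmax (ler_norm _). Qed.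
Let c_ge0 : 0 <= c. Proof. exact: normr_ge0. Qed.
Let ci_ge0 : 0 <= ci. Proof. exact: normr_ge0. Qed.
Let hm_ge0 : 0 <= hm. Proof. exact: normr_ge0. Qed.
Let P_ge0 : 0 <= P. Proof. by rewrite mulr_ge0 ?addr_ge0 ?mulr_ge0. Qed.
Let l2D u v : l2 (u + v) <= l2 u + l2 v. Proof. by rewrite linearD l2normD. Qed.
Let l2B u v : l2 (u - v) <= l2 u + l2 v. Proof. by rewrite linearB l2normB. Qed.

Lemma IH_l2_error v : l2 (v - IH v) <= c * H * normh v.
Proof. by rewrite (le_trans (A7_l2_error v)) // -!mulrA ler_normlM ?mulr_ge0. Qed.

Lemma IH_stable v : normH (IH v) <= c * normh v.
Proof. by rewrite (le_trans (A7_stable v)) // ler_normlM. Qed.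

Lemma IH_l2_error_VH v : v \in VH -> l2 (v - IH v) <= c * H * normH v.
Proof.
move=> vVH; rewrite (le_trans (A7_l2_error_VH vVH)) //.
by rewrite -!mulrA ler_normlM ?mulr_ge0 ?normH_ge0.
Qed.

Lemma IH_l2_stable_VH v : v \in VH -> l2 (IH v) <= c * normH v.
Proof. by move=> vVH; rewrite (le_trans (A7_l2_stable_VH vVH)) // ler_normlM ?normH_ge0. Qed.

Lemma JH_stable v : v \in VH -> normH (JH v) <= ci * normH v.
Proof. by move=> vVH; rewrite (le_trans (A7_inverse_stable vVH)) // ler_normlM ?normH_ge0. Qed.

Lemma JH_IH_VH v : JH (IH v) \in VH.
Proof. by case: (A7_inverse (A7_IH_VH v)). Qed.

Lemma IH_JH_IH v : IH (JH (IH v)) = IH v.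
Proof. by case: (A7_inverse (A7_IH_VH v)). Qed.

Lemma JH_IHB u v : JH (IH (u - v)) = JH (IH u) - JH (IH v).
Proof.
have zVH : JH (IH u) - JH (IH v) \in VH by rewrite memvB ?JH_IH_VH.
have [_ _ <-] := A7_inverse zVH.
by congr (JH _); rewrite !linearB !IH_JH_IH.
Qed.

Lemma JH_IH_stable v : normH (JH (IH v)) <= ci * c * normh v.
Proof. by rewrite -mulrA (le_trans (JH_stable (A7_IH_VH v))) // ler_wpM2l ?IH_stable. Qed.

Lemma l2_VH v : v \in VH -> l2 v <= c * (hm + 1) * normH v.
Proof.
move=> vVH; rewrite -{1}[v](subrK (IH v)) (le_trans (l2D _ _)) //.
have := IH_l2_error_VH vVH; have := IH_l2_stable_VH vVH.
have : c * H * normH v <= c * hm * normH v by rewrite ler_wpM2r ?normH_ge0 ?ler_wpM2l.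
rewrite mulrDr mulr1 mulrDl; lra.
Qed.

(* IH v = IH (JH (IH v)) with JH (IH v) in VH, so the L^2-stability of IH on VH applies. *)
Lemma l2_le_friedrichs v : l2 v <= P * normh v.
Proof.
rewrite -{1}[v](subrK (IH v)) (le_trans (l2D _ _)) // -{2}IH_JH_IH.
have := IH_l2_stable_VH (JH_IH_VH v); have := IH_l2_error v.
have : c * normH (JH (IH v)) <= c * (ci * c * normh v) by rewrite ler_wpM2l ?JH_IH_stable.
have : c * H * normh v <= c * hm * normh v by rewrite ler_wpM2r ?ler_wpM2l.
rewrite /friedrichs_constant; nra.
Qed.

Lemma l2_JH_IH_error v : l2 (v - JH (IH v)) <= c * H * (1 + ci * c) * normh v.
Proof.
have -> : v - JH (IH v) = (v - IH v) - (JH (IH v) - IH (JH (IH v))).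
  by rewrite IH_JH_IH opprB addrA subrK.
rewrite (le_trans (l2B _ _)) //.
have := IH_l2_error_VH (JH_IH_VH v); have := IH_l2_error v.
have : c * H * normH (JH (IH v)) <= c * H * (ci * c * normh v).
  by rewrite ler_wpM2l ?mulr_ge0 ?JH_IH_stable.
nra.
Qed.

Lemma l2_JH_IH_split u v :
  l2 (u - JH (IH v))
  <= c * H * (1 + ci * c) * normh u + c * (hm + 1) * ci * c * normh (u - v).
Proof.
have -> : u - JH (IH v) = (u - JH (IH u)) + JH (IH (u - v)) by rewrite JH_IHB addrA subrK.
rewrite (le_trans (l2D _ _)) // lerD ?l2_JH_IH_error //.
have := l2_VH (JH_IH_VH (u - v)).
have : c * (hm + 1) * normH (JH (IH (u - v))) <= c * (hm + 1) * (ci * c * normh (u - v)).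
  by rewrite ler_wpM2l ?mulr_ge0 ?addr_ge0 ?JH_IH_stable.
rewrite !mulrA; lra.
Qed.

Variables (ah : Vh -> Vh -> R) (f : L) (TH : finType) (aT : TH -> Vh -> Vh -> R).
Variables (QO Qk : TH -> Vh -> Vh) (s : R) (uh uLOD : Vh).

Local Notation Nf := (l2norm ip f).
Local Notation ideal_ms Phi := (Phi + \sum_(T : TH) QO T Phi).
Local Notation lod_ms Phi := (Phi + \sum_(T : TH) Qk T Phi).
(* [ideal_ms Phi] is the paper's (1 - P_h) Phi; [lod_ms Phi] uses the localized correctors. *)

Hypotheses (alpha_gt0 : 0 < alpha) (alpha_le_beta : alpha <= beta) (s_ge0 : 0 <= s).
Hypothesis ahP : is_scalar_product_on fullv ah.
Hypothesis ah_coercive : forall v, alpha * normh v ^+ 2 <= ah v v.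
Hypothesis ah_bounded : forall v w, ah v w <= beta * normh v * normh w.
Hypothesis ah_sum : forall v w, ah v w = \sum_(T : TH) aT T v w.
Hypothesis QO_corrector :
  forall T Phi, is_corrector (fun w => IH w == 0) ah (aT T) Phi (QO T Phi).
Hypothesis A8_localization : forall Phi, Phi \in VH ->
  normh (\sum_(T : TH) Qk T Phi - \sum_(T : TH) QO T Phi) ^+ 2
  <= C8 * s ^+ 2 * normh (ideal_ms Phi) ^+ 2.
Hypothesis uh_solution : forall v, ah uh v = ip f (emb v).
Hypothesis uLOD_ms : exists2 Psi, Psi \in VH & uLOD = lod_ms Psi.
Hypothesis uLOD_galerkin :
  forall Phi, Phi \in VH -> ah uLOD (lod_ms Phi) = ip f (emb (lod_ms Phi)).

Let ahI := inner_product_fullv ahP.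
Let Nf_ge0 : 0 <= Nf. Proof. exact: sqrtr_ge0. Qed.

Lemma IH_sum_QO Phi : IH (\sum_(T : TH) QO T Phi) = 0.
Proof. by rewrite linear_sum big1 // => T _; case: (QO_corrector T Phi) => /eqP. Qed.

Lemma ah_ideal_ms_W Phi w : IH w = 0 -> ah (ideal_ms Phi) w = 0.
Proof.
move=> IHw; rewrite ipDl // ip_suml // ah_sum -big_split big1 // => T _.
by rewrite (QO_corrector T Phi).2 ?IHw //; apply: subrr.
Qed.

Lemma normh_le_coercive v K : 0 <= K -> ah v v <= K * normh v -> normh v <= K / alpha.
Proof. by move=> K_ge0 le_K; rewrite le_div_of_coercive // (le_trans (ah_coercive v)). Qed.

Lemma ah_uh_le v : ah uh v <= Nf * l2 v.
Proof. by rewrite uh_solution ip_CauchySchwarz. Qed.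

Lemma uh_energy_bound : normh uh <= P * Nf / alpha.
Proof.
apply: normh_le_coercive; first exact: mulr_ge0.
rewrite (le_trans (ah_uh_le uh)) // [Nf * _]mulrC [P * _ * _]mulrAC.
by rewrite ler_wpM2r ?l2_le_friedrichs.
Qed.

Lemma ideal_ms_error : normh (uh - ideal_ms (JH (IH uh))) <= c * H * Nf / alpha.
Proof.
set w := uh - _.
have IHw : IH w = 0 by rewrite linearB linearD IH_JH_IH IH_sum_QO addr0 subrr.
apply: normh_le_coercive; first by rewrite !mulr_ge0.
rewrite {1}/w ipBl // ah_ideal_ms_W // subr0 (le_trans (ah_uh_le w)) //.
rewrite [Nf * _]mulrC [c * H * Nf * _]mulrAC ler_wpM2r //.
by rewrite -[w in l2 w]subr0 -IHw IH_l2_error.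
Qed.

Lemma galerkin_orthogonality Phi :
  Phi \in VH -> ah (uh - uLOD) (lod_ms Phi - uLOD) = 0.
Proof.
case: uLOD_ms => Psi PsiVH uLODE PhiVH.
have uLOD_uLOD : ah uLOD uLOD = ip f (emb uLOD).
  by rewrite {2}uLODE (uLOD_galerkin PsiVH) -uLODE.
by rewrite ipBl // !ipBr // !uh_solution (uLOD_galerkin PhiVH) uLOD_uLOD subrr.
Qed.

Lemma cea Phi :
  Phi \in VH -> normh (uh - uLOD) <= beta / alpha * normh (uh - lod_ms Phi).
Proof.
move=> PhiVH; rewrite mulrAC; apply: normh_le_coercive.
  by rewrite mulr_ge0 ?normh_ge0 // (le_trans (ltW alpha_gt0)).
have splitE : uh - uLOD = (uh - lod_ms Phi) + (lod_ms Phi - uLOD) by rewrite addrA subrK.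
rewrite {2}splitE ipDr // galerkin_orthogonality // addr0.
by rewrite (le_trans (ah_bounded _ _)) // mulrAC.
Qed.

Local Notation c8 := (Num.sqrt `|C8|).
Local Notation Ce := (energy_error_constant alpha beta CI Cinv C8 Hmax).

Lemma localization_error Phi : Phi \in VH ->
  normh (\sum_(T : TH) Qk T Phi - \sum_(T : TH) QO T Phi) <= c8 * s * normh (ideal_ms Phi).
Proof.
move=> PhiVH; rewrite -mulrA; apply: le_sqrt_normM; rewrite ?mulr_ge0 //.
by rewrite exprMn mulrA A8_localization.
Qed.

Lemma energy_error : normh (uh - uLOD) <= Ce * (H + s) * Nf.
Proof.
set Phi := JH (IH uh); set Q := P + c * hm; set A := Nf / alpha.
have A_ge0 : 0 <= A by rewrite /A divr_ge0 // ltW.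
have Q_ge0 : 0 <= Q by rewrite /Q addr_ge0 // mulr_ge0.
have w_bound : normh (uh - ideal_ms Phi) <= c * H * A by rewrite mulrA ideal_ms_error.
have ideal_ms_bound : normh (ideal_ms Phi) <= Q * A.
  rewrite -[ideal_ms Phi](subKr uh) (le_trans (norm_fullvB normhP _ _)) //.
  have := uh_energy_bound; rewrite -mulrA -/A => uh_bound.
  have : c * H * A <= c * hm * A by rewrite ler_wpM2r ?ler_wpM2l.
  rewrite /Q mulrDl; lra.
have dQ_bound :
    normh (\sum_(T : TH) Qk T Phi - \sum_(T : TH) QO T Phi) <= c8 * s * (Q * A).
  by rewrite (le_trans (localization_error (JH_IH_VH uh))) // ler_wpM2l ?mulr_ge0 ?sqrtr_ge0.
have lod_ms_error : normh (uh - lod_ms Phi) <= c * H * A + c8 * s * (Q * A).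
  have -> : uh - lod_ms Phi
            = (uh - ideal_ms Phi) - (\sum_(T : TH) Qk T Phi - \sum_(T : TH) QO T Phi).
    by rewrite opprB !opprD !addrA subrK.
  by rewrite (le_trans (norm_fullvB _ _ _)) // lerD.
have le_Ce : c * H * A + c8 * s * (Q * A) <= (c + c8 * Q) * (H + s) * A.
  have : 0 <= c * s * A + c8 * Q * H * A.
    have c8_ge0 : 0 <= c8 := sqrtr_ge0 _.
    exact: addr_ge0 (mulr_ge0 (mulr_ge0 c_ge0 s_ge0) A_ge0)
                    (mulr_ge0 (mulr_ge0 (mulr_ge0 c8_ge0 Q_ge0) H_ge0) A_ge0).
  have : (c + c8 * Q) * (H + s) * A
         = c * H * A + c8 * s * (Q * A) + (c * s * A + c8 * Q * H * A) by ring.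
  lra.
have beta_alpha_ge0 : 0 <= beta / alpha by rewrite divr_ge0 ?ltW // (lt_le_trans alpha_gt0).
rewrite (le_trans (cea (JH_IH_VH uh))) //.
have -> : Ce * (H + s) * Nf = beta / alpha * ((c + c8 * Q) * (H + s) * A).
  rewrite /energy_error_constant /A -/Q; field; exact: lt0r_neq0.
by rewrite ler_wpM2l // (le_trans lod_ms_error).
Qed.

Theorem glod_error_bound :
  l2 (uh - JH (IH uLOD)) + normh (uh - uLOD)
  <= glod_constant alpha beta CI Cinv C8 Hmax * (H + s) * Nf.
Proof.
set B := c * (1 + ci * c); set K := c * (hm + 1) * ci * c.
set X := Ce * (H + s) * Nf; set Z := P * Nf / alpha.
have B_ge0 : 0 <= B := mulr_ge0 c_ge0 (addr_ge0 ler01 (mulr_ge0 ci_ge0 c_ge0)).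
have K_ge0 : 0 <= K.
  exact: mulr_ge0 (mulr_ge0 (mulr_ge0 c_ge0 (addr_ge0 hm_ge0 ler01)) ci_ge0) c_ge0.
have Z_ge0 : 0 <= Z := divr_ge0 (mulr_ge0 P_ge0 Nf_ge0) (ltW alpha_gt0).
have uh_part : B * H * normh uh <= B * (H + s) * Z.
  apply: (@le_trans _ _ (B * H * Z)).
    by rewrite ler_wpM2l ?(mulr_ge0 B_ge0) ?uh_energy_bound.
  by rewrite ler_wpM2r // ler_wpM2l // lerDl.
have e_part : K * normh (uh - uLOD) <= K * X by rewrite ler_wpM2l ?energy_error.
have -> : glod_constant alpha beta CI Cinv C8 Hmax * (H + s) * Nf
          = B * (H + s) * Z + (1 + K) * X.
  by rewrite /glod_constant /B /K /X /Z; field; exact: lt0r_neq0.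
have := l2_JH_IH_split uh uLOD; have := energy_error.
have -> : c * H * (1 + ci * c) = B * H by rewrite /B mulrAC.
rewrite -/K -/X; lra.
Qed.

End GLODErrorEstimate.

Theorem theorem3p1
  (R : rcfType) (d p : nat) (alpha beta CI Cinv theta C8 Hmax : R) :
  (1 <= d <= 3)%N -> (p <= 1)%N ->
  0 < alpha -> alpha <= beta -> 0 < theta -> theta < 1 ->
  exists C : R,
  forall (Vh : vectType R) (L : lmodType R) (ip : L -> L -> R)
    (emb : {linear Vh -> L}) (f : L)
    (VH : {vspace Vh}) (ah aH : Vh -> Vh -> R) (normh normH : Vh -> R)
    (CHh H : R) (IH : {linear Vh -> Vh}) (JH : Vh -> Vh)
    (TH Th : finType) (touch : rel TH) (parent : Th -> TH)
    (vanish : Th -> {vspace Vh}) (aT : TH -> Vh -> Vh -> R)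
    (Q : nat -> TH -> Vh -> Vh) (QO : TH -> Vh -> Vh) (uh : Vh),
  is_inner_product ip ->
  0 < H -> H <= Hmax ->
  is_scalar_product_on fullv ah -> is_scalar_product_on VH aH ->
  is_norm_on fullv normh -> is_norm_on VH normH ->
  (forall v, alpha * normh v ^+ 2 <= ah v v) ->
  (forall v w, ah v w <= beta * normh v * normh w) ->
  (forall v, normH v <= CHh * normh v) ->
  (forall v, IH v \in VH) ->
  (forall v, l2norm ip (emb (v - IH v)) <= CI * H * normh v) ->
  (forall v, normH (IH v) <= CI * normh v) ->
  (forall v, v \in VH -> l2norm ip (emb (v - IH v)) <= CI * H * normH v) ->
  (forall v, v \in VH -> l2norm ip (emb (IH v)) <= CI * normH v) ->
  (forall v, v \in VH -> [/\ JH v \in VH, IH (JH v) = v & JH (IH v) = v]) ->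
  (forall v, v \in VH -> normH (JH v) <= Cinv * normH v) ->
  (forall T, touch T T) -> symmetric touch ->
  (forall T, is_bilinear (aT T)) ->
  (forall v w, ah v w = \sum_(T : TH) aT T v w) ->
  (forall k T phi, is_corrector (inWloc IH touch parent vanish k T)
                                ah (aT T) phi (Q k T phi)) ->
  (forall T phi, is_corrector (fun w => IH w == 0) ah (aT T) phi (QO T phi)) ->
  (forall k Phi, (1 <= k)%N -> Phi \in VH ->
     normh (\sum_(T : TH) Q k T Phi - \sum_(T : TH) QO T Phi) ^+ 2
     <= C8 * (k%:R ^+ d * theta ^+ (2 * k) * H ^- (2 * p))
           * normh (Phi + \sum_(T : TH) QO T Phi) ^+ 2) ->
  (forall v, ah uh v = ip f (emb v)) ->
  forall (k : nat) (uLOD : Vh), (1 <= k)%N ->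
  (exists2 Phi, Phi \in VH & uLOD = Phi + \sum_(T : TH) Q k T Phi) ->
  (forall Phi, Phi \in VH ->
     ah uLOD (Phi + \sum_(T : TH) Q k T Phi)
     = ip f (emb (Phi + \sum_(T : TH) Q k T Phi))) ->
  l2norm ip (emb (uh - JH (IH uLOD))) + normh (uh - uLOD)
  <= C * (H + H ^- p * Num.sqrt (k%:R ^+ d) * theta ^+ k) * l2norm ip f.
Proof.
move=> _ _ alpha_gt0 alpha_le_beta theta_gt0 _.
exists (glod_constant alpha beta CI Cinv C8 Hmax).
move=> Vh L ip emb f VH ah aH normh normH CHh H IH JH TH Th touch parent vanish aT Q QO uh
  ipP H_gt0 H_le_Hmax ahP _ normhP normHP coercive bounded _ IH_VH l2_error stable
  l2_error_VH l2_stable_VH inverse inverse_stable _ _ _ ah_sum _ QO_corrector A8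
  uh_solution k uLOD k_ge1 uLOD_ms galerkin.
have rate_ge0 : 0 <= H ^- p * Num.sqrt (k%:R ^+ d) * theta ^+ k.
  by rewrite !mulr_ge0 ?sqrtr_ge0 ?exprn_ge0 ?invr_ge0 ?exprn_ge0 ?ltW.
apply: (glod_error_bound ipP H_gt0 H_le_Hmax normhP normHP IH_VH l2_error stable
  l2_error_VH l2_stable_VH inverse inverse_stable alpha_gt0 alpha_le_beta rate_ge0
  ahP coercive bounded ah_sum QO_corrector _ uh_solution uLOD_ms galerkin).
by move=> Phi PhiVH; rewrite localization_rate_sqr A8.
Qed.
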